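(* In the no-regret model with signal sets $S_i=A_i\sqcup\{\bot\}$, consider the following principal algorithm with hyperparameter $L$. For each agent $i=1,\dots,n$ and each $a_{-i}\in A_{-i}$: set $\mathbf{p}^1=\mathbf{1}\in\mathbb{R}^{A_i}$; for $\ell=1,\dots,L$ (one round $t$ each), set $P_i^t(\cdot)=\mathbf{p}^\ell[\cdot]$ and $P_j^t(a_j')=2\cdot\mathbb{1}[a_j'=a_j]$ for all $j\ne i$ (where $a_j$ is $j$'s action in $a_{-i}$), send signals $s_i^t=\bot$ and $s_j^t=a_j$ for $j\ne i$, observe $a^t$, and set $\mathbf{p}^{\ell+1}=\Pi_{\mathcal{P}_i}[\mathbf{p}^\ell-\eta\mathbf{e}_{a_i^t}]$ with $\eta=\sqrt{m_i/L}$ and $\mathcal{P}_i=\{\mathbf{p}\in[0,2]^{A_i}:\langle\mathbf{1},\mathbf{p}\rangle=m_i\}$; then set $\tilde U_i(\cdot,a_{-i})=-\frac1L\sum_{\ell=1}^L\mathbf{p}^\ell$. Output $\tilde U$. For an appropriate choice of $L$, this algorithm $\varepsilon$-learns any game in $\mathrm{poly}(M)/\varepsilon^2$ rounds.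
   Context: A normal-form game has agents $i\in[n]$, finite action sets $A_i$ with $|A_i|=m_i\ge2$, $A=\prod_iA_i$, $m=\max_i m_i$, $M=\prod_i m_i$, and unknown utilities $U_i:A\to[0,1]$. In each round $t\le T$ the principal chooses payments $P_i^t:A_i\to\mathbb{R}_+$ and sends each agent a signal $s_i^t$ from a finite set $S_i$; agent $i$'s utility that round is $U_i^t(a)=U_i(a)+P_i^t(a_i)$; agents choose actions and the principal observes $a^t$. No-regret model: there is a constant $C\le\mathrm{poly}(M)$ such that for every agent $i$, signal $s_i\in S_i$ and every $t\le T$, $\hat R_i(t,s_i):=\max_{a_i\in A_i}\sum_{\tau\le t,\,s_i^\tau=s_i}[U_i^\tau(a_i,a_{-i}^\tau)-U_i^\tau(a^\tau)]\le C\sqrt{T}$. $\Pi$ denotes Euclidean projection, $\mathbf{e}_a$ the unit vector. The principal $\varepsilon$-learns the game if it outputs $\tilde U_i:A\to\mathbb{R}$ such that there exist $W_i:A_{-i}\to\mathbb{R}$ with $|U_i(a)+W_i(a_{-i})-\tilde U_i(a)|\le\varepsilon$ for all $i$ and $a$. *)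

From HB Require Import structures.
From mathcomp Require Import all_boot all_order all_algebra.
From mathcomp Require Import reals.
From Stdlib Require Import ClassicalEpsilon.
Set Implicit Arguments. Unset Strict Implicit. Unset Printing Implicit Defensive.
Import Order.TTheory GRing.Theory Num.Theory.
Local Open Scope ring_scope.

Section Game.
Context (R : realType) (n : nat) (m : 'I_n -> nat).

(* Agent i's action set A_i is 'I_(m i); joint action profiles A = prod_i A_i. *)
Definition Prof := {dffun forall i : 'I_n, 'I_(m i)}.

Definition Mprod : nat := (\prod_(i < n) m i)%N.

Definition cast_act (i j : 'I_n) (e : i = j) (x : 'I_(m i)) : 'I_(m j) :=
  ecast k 'I_(m k) e x.

Definition upd (a : Prof) (i : 'I_n) (x : 'I_(m i)) : Prof :=
  @finfun _ (fun j => 'I_(m j))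
    (fun j => match i =P j with
              | ReflectT e => cast_act e x
              | ReflectF _ => a j end).

(* A phase of the algorithm is a pair (i, a_{-i}); a_{-i} is represented by
   the unique profile b with b_{-i} = a_{-i} and b_i = 0 (first action). *)
Definition Ph := {x : 'I_n * Prof | val (x.2 x.1) == 0%N}.

Local Notation vec i := {ffun 'I_(m i) -> R}.

Definition unitv (i : 'I_n) (a : 'I_(m i)) : vec i := [ffun x => (x == a)%:R].

Definition Pset (i : 'I_n) (p : vec i) : Prop :=
  (forall x, 0 <= p x <= 2) /\ \sum_x p x = (m i)%:R.

Definition sqdist (i : 'I_n) (p q : vec i) : R := \sum_x (p x - q x) ^+ 2.

(* Euclidean projection onto P_i (the minimizer of the distance, chosen by
   Hilbert's epsilon; it exists and is unique since P_i is nonempty, convex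
   and compact). *)
Definition proj (i : 'I_n) (v : vec i) : vec i :=
  epsilon (inhabits v)
    (fun q => Pset q /\ forall p, Pset p -> sqdist q v <= sqdist p v).

(* Projected gradient descent of the algorithm for agent i, with L steps.
   obs l = agent i's action in the l-th round (0-based) of the phase.
   gd L obs l = p^{l+1} in the paper's 1-based indexing. *)
Fixpoint gd (i : 'I_n) (L : nat) (obs : nat -> 'I_(m i)) (l : nat) : vec i :=
  match l with
  | 0 => [ffun => 1]
  | l'.+1 => proj [ffun x => gd L obs l' x - Num.sqrt ((m i)%:R / L%:R) * unitv (obs l') x]
  end.

(* Rounds are numbered 0,1,...,T-1; phases are run in the order of enum Ph,
   each for L consecutive rounds.  T = #|Ph| * L = L * sum_i |A_{-i}|. *)
Definition horizon (L : nat) : nat := (#|{: Ph}| * L)%N.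

Definition phase_at (L t : nat) : option Ph :=
  nth None [seq Some x | x <- enum {: Ph}] (t %/ L).

(* act t = the joint action observed in round t *)
Definition obs_of (L : nat) (act : nat -> Prof) (ph : Ph) : nat -> 'I_(m (val ph).1) :=
  fun l => act (enum_rank ph * L + l)%N (val ph).1.

Definition pvec (L : nat) (act : nat -> Prof) (ph : Ph) (l : nat) : vec (val ph).1 :=
  gd L (obs_of L act ph) l.

Definition pay (L : nat) (act : nat -> Prof) (t : nat) (j : 'I_n) (y : 'I_(m j)) : R :=
  match phase_at L t with
  | Some ph =>
      match j =P (val ph).1 with
      | ReflectT e => pvec L act ph (t %% L) (cast_act e y)
      | ReflectF _ => if y == (val ph).2 j then 2 else 0
      end
  | None => 0
  end.

(* Signal s_j^t in S_j = A_j + {bot}; None encodes bot. *)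
Definition signal (L : nat) (t : nat) (j : 'I_n) : option 'I_(m j) :=
  match phase_at L t with
  | Some ph => if j == (val ph).1 then None else Some ((val ph).2 j)
  | None => None
  end.

Definition util (U : 'I_n -> Prof -> R) (L : nat) (act : nat -> Prof)
  (t : nat) (j : 'I_n) (a : Prof) : R := U j a + @pay L act t j (a j).

(* No-regret model with constant C and horizon T: for every agent j, signal s,
   prefix length t <= T and deviation x,
   sum_{tau < t, s_j^tau = s} [U_j^tau(x, a_{-j}^tau) - U_j^tau(a^tau)] <= C sqrt T
   (this is the max over x of the regret being <= C sqrt T). *)
Definition no_regret (U : 'I_n -> Prof -> R) (L : nat) (act : nat -> Prof) (C : R) : Prop :=
  forall (j : 'I_n) (s : option 'I_(m j)) (t : nat), (t <= horizon L)%N ->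
  forall x : 'I_(m j),
    \sum_(tau < t | signal L tau j == s)
       (util U L act tau j (upd (act tau) x) - util U L act tau j (act tau))
    <= C * Num.sqrt (horizon L)%:R.

Definition output (L : nat) (act : nat -> Prof) (i : 'I_n) (a : Prof) : R :=
  match [pick ph : Ph | ((val ph).1 == i) &&
                        [forall j, (j != i) ==> ((val ph).2 j == a j)]] with
  | Some ph =>
      match (val ph).1 =P i with
      | ReflectT e =>
          - (L%:R)^-1 * \sum_(l < L) pvec L act ph l (cast_act (esym e) (a i))
      | ReflectF _ => 0
      end
  | None => 0
  end.

(* eps-learning: exists W_i : A_{-i} -> R (a function of a depending only on
   a_{-i}) with |U_i(a) + W_i(a_{-i}) - tilde U_i(a)| <= eps. *)
Definition eps_learns (eps : R) (U Ut : 'I_n -> Prof -> R) : Prop :=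
  exists W : 'I_n -> Prof -> R,
    (forall i (a a' : Prof), (forall j, j != i -> a j = a' j) -> W i a = W i a') /\
    (forall i (a : Prof), `|U i a + W i a - Ut i a| <= eps).

End Game.

From HB Require Import structures.
From mathcomp Require Import all_boot all_order all_algebra.
From mathcomp Require Import classical_sets reals.
From Stdlib Require Import ClassicalEpsilon.
From mathcomp Require Import ring lra zify.
Import Order.TTheory GRing.Theory Num.Theory.
Local Open Scope ring_scope.
Set Implicit Arguments. Unset Strict Implicit. Unset Printing Implicit Defensive.

(* In phase (i, a_{-i}) every other agent j is paid 2 for its recommended
   action a_j; as its regret against a_j is at most C sqrt T, it deviates in at
   most m_j C sqrt T rounds overall.  Agent i faces U_i(., a_{-i}) plus prices
   set by projected gradient descent, whose regret against the comparator
   c - U_i(., a_{-i}) in P_i is at most sqrt (m_i L).  Together with agent i's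
   own no-regret bound on its bot-signal rounds, this bounds from above, for
   every prefix of agent i's phases, the summed L-scaled output errors at any x.
   These errors sum to zero over x, which gives the matching lower bound, and a
   single phase is the difference of two prefixes; so the error is
   poly(M) (C + 1) / sqrt L. *)

Lemma nonincreasing_lipschitz_ivt (R : realType) (g : R -> R) (K a b v : R) : 0 < K ->
  (forall t d, 0 <= d -> g t - K * d <= g (t + d) <= g t) ->
  g b < v <= g a -> exists t, g t = v.
Proof.
move=> K0 gL /andP[gbv vga].
pose S : set R := fun t => v <= g t.
have supS : has_sup S.
  split; first by exists a.
  exists b => t St; rewrite leNgt; apply/negP => bt.
  have /andP[_] : g b - K * (t - b) <= g (b + (t - b)) <= g b by apply: gL; lra.
  by rewrite [b + _]addrC subrK; move: St; rewrite /S /=; lra.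
have Sup := sup_upper_bound supS.
exists (sup S); apply/eqP; rewrite eq_le; apply/andP; split.
- rewrite leNgt; apply/negP => vlt.
  pose d := (g (sup S) - v) / K.
  have d0 : 0 < d by rewrite divr_gt0 // subr_gt0.
  have Kd : K * d = g (sup S) - v by rewrite mulrC divfK ?gt_eqF.
  have /andP[gd _] := gL (sup S) d (ltW d0).
  have : S (sup S + d) by rewrite /S /=; lra.
  by move/Sup; lra.
- rewrite leNgt; apply/negP => ltv.
  pose d := (v - g (sup S)) / K.
  have d0 : 0 < d by rewrite divr_gt0 // subr_gt0.
  have Kd : K * d = v - g (sup S) by rewrite mulrC divfK ?gt_eqF.
  have [e Se lte] := sup_adherent d0 supS.
  have eS : e <= sup S by exact: Sup.
  have /andP[ge _] : g e - K * (sup S - e) <= g (e + (sup S - e)) <= g e.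
    by apply: gL; lra.
  rewrite [e + _]addrC subrK in ge; move: Se; rewrite /S /= => Se.
  have : K * (sup S - e) < K * d by rewrite ltr_pM2l //; lra.
  lra.
Qed.

Section CappedSimplex.
Variables (R : realType) (n : nat) (m : 'I_n -> nat) (i : 'I_n).
Local Notation k := (m i).
Local Notation vec := {ffun 'I_k -> R}.

Definition clamp (y : R) : R := if y < 0 then 0 else if 2 < y then 2 else y.

Lemma clamp_ge0_le2 y : 0 <= clamp y <= 2.
Proof. by rewrite /clamp; case: ltrP => y0; [|case: ltrP]; lra. Qed.

Lemma clamp_lipschitz y d : 0 <= d -> clamp y - d <= clamp (y - d) <= clamp y.
Proof.
move=> d0; rewrite /clamp.
by case: (ltrP y 0); case: (ltrP (y - d) 0); try case: (ltrP 2 y);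
  try case: (ltrP 2 (y - d)); lra.
Qed.

Lemma clamp_obtuse y w : 0 <= w <= 2 -> 0 <= (clamp y - y) * (w - clamp y).
Proof. by move=> w02; rewrite /clamp; case: ltrP => y0; [|case: ltrP]; nra. Qed.

Lemma sqdistC (p q : vec) : sqdist p q = sqdist q p.
Proof. by apply: eq_bigr => x _; rewrite -sqrrN opprB. Qed.

Lemma sqdist_ge0 (p q : vec) : 0 <= sqdist p q.
Proof. by apply: sumr_ge0 => x _; rewrite sqr_ge0. Qed.

Lemma sqdist_eq0 (p q : vec) : sqdist p q = 0 -> p = q.
Proof.
move=> /eqP; rewrite psumr_eq0 => [/allP pq|x _]; last exact: sqr_ge0.
by apply/ffunP => x; move: (pq x (mem_index_enum x)); rewrite sqrf_eq0 subr_eq0 => /eqP.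
Qed.

Lemma sqdist_split (p q v : vec) :
  sqdist q v = sqdist p v + sqdist q p + 2 * \sum_x (q x - p x) * (p x - v x).
Proof. by rewrite /sqdist big_distrr -!big_split; apply: eq_bigr => x _ /=; ring. Qed.

Hypothesis k_gt0 : (0 < k)%N.

Lemma clamp_level (v : vec) : exists t, \sum_x clamp (v x - t) = k%:R.
Proof.
pose B := \sum_x `|v x|.
have vB x : `|v x| <= B.
  by rewrite /B (bigD1 x) //= lerDl; apply: sumr_ge0 => y _; exact: normr_ge0.
apply: (@nonincreasing_lipschitz_ivt _ _ k%:R (- B - 2) B); first by rewrite ltr0n.
- move=> t d d0.
  have -> : k%:R * d = \sum_(x : 'I_k) d by rewrite sumr_const card_ord mulr_natl.
  rewrite -sumrB.
  by apply/andP; split; apply: ler_sum => x _; rewrite opprD addrA;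
    have /andP[] := clamp_lipschitz (v x - t) d0.
- apply/andP; split.
  + rewrite big1 ?ltr0n // => x _; rewrite /clamp.
    by have := vB x; have := ler_norm (v x); do 2?[case: ltrP]; lra.
  + have -> : k%:R = \sum_(x : 'I_k) (1 : R) by rewrite sumr_const card_ord.
    apply: ler_sum => x _; rewrite /clamp.
    by have := vB x; have := ler_norm (- v x); rewrite normrN; do 2?[case: ltrP]; lra.
Qed.

Section ClampedShift.
Variables (v : vec) (t : R).
Hypothesis sum_clamp : \sum_x clamp (v x - t) = k%:R.
Let p : vec := [ffun x => clamp (v x - t)].

Lemma clamp_Pset : Pset p.
Proof.
split=> [x|]; first by rewrite ffunE clamp_ge0_le2.
by rewrite -sum_clamp; apply: eq_bigr => x _; rewrite ffunE.
Qed.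

Lemma clamp_pythagoras w : Pset w -> sqdist p v + sqdist w p <= sqdist w v.
Proof.
move=> [w02 sum_w]; rewrite (sqdist_split p w v) lerDl pmulr_rge0 //.
have -> : \sum_x (w x - p x) * (p x - v x) =
          \sum_x (clamp (v x - t) - (v x - t)) * (w x - clamp (v x - t))
          - t * \sum_x (w x - p x).
  by rewrite big_distrr -sumrB; apply: eq_bigr => x _ /=; rewrite /p ffunE; ring.
have [_ sum_p] := clamp_Pset.
rewrite sumrB sum_w sum_p subrr mulr0 subr0.
by apply: sumr_ge0 => x _; exact: clamp_obtuse.
Qed.

End ClampedShift.

Lemma proj_clamp (v : vec) :
  exists2 t, \sum_x clamp (v x - t) = k%:R & proj v = [ffun x => clamp (v x - t)].
Proof.
have [t sum_t] := clamp_level v; exists t => //.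
(* proj v is some minimiser, and the Pythagorean inequality for the clamped
   shift p forces every minimiser to be p *)
set p := [ffun x => _].
have ex_min : exists q, Pset q /\ forall w, Pset w -> sqdist q v <= sqdist w v.
  exists p; split=> [|w Pw]; first exact: clamp_Pset.
  by have := clamp_pythagoras sum_t Pw; have := sqdist_ge0 w p; lra.
have [Pq q_min] := epsilon_spec (inhabits v) _ ex_min.
apply: sqdist_eq0; have := clamp_pythagoras sum_t Pq.
by have := q_min p (clamp_Pset sum_t); have := sqdist_ge0 (proj v) p; lra.
Qed.

Lemma proj_Pset (v : vec) : Pset (proj v).
Proof. by have [t sum_t ->] := proj_clamp v; exact: clamp_Pset. Qed.

Lemma proj_contraction (v w : vec) : Pset w -> sqdist (proj v) w <= sqdist v w.
Proof.
move=> Pw; have [t sum_t ->] := proj_clamp v.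
rewrite sqdistC [sqdist v w]sqdistC.
by have := clamp_pythagoras sum_t Pw; have := sqdist_ge0 [ffun x => clamp (v x - t)] v; lra.
Qed.

End CappedSimplex.

Section ProjectedGradient.
Variables (R : realType) (n : nat) (m : 'I_n -> nat) (i : 'I_n).
Hypothesis k_gt0 : (0 < m i)%N.
Local Notation k := (m i).
Local Notation vec := {ffun 'I_k -> R}.
Variables (L : nat) (obs : nat -> 'I_k).
Local Notation p := (gd R L obs).
Local Notation eta := (Num.sqrt (k%:R / L%:R) : R).

Lemma gd_Pset l : Pset (p l).
Proof.
case: l => [|l]; last exact: proj_Pset.
split=> [x|]; first by rewrite ffunE; lra.
by rewrite (eq_bigr (fun _ => 1)) ?sumr_const ?card_ord // => x _; rewrite ffunE.
Qed.

Lemma sqdist_descent (v q : vec) (a : 'I_k) (e : R) :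
  sqdist [ffun x => v x - e * unitv R a x] q = sqdist v q - 2 * e * (v a - q a) + e ^+ 2.
Proof.
rewrite /sqdist (bigD1 a) // [in RHS](bigD1 a) //= !ffunE eqxx mulr1.
rewrite (eq_bigr (fun x => (v x - q x) ^+ 2)) => [|x xa]; first ring.
by rewrite !ffunE (negbTE xa) mulr0 subr0.
Qed.

Lemma gd_telescope (q : vec) N : Pset q ->
  2 * eta * \sum_(l < N) (p l (obs l) - q (obs l))
    <= sqdist (p 0) q - sqdist (p N) q + N%:R * eta ^+ 2.
Proof.
move=> Pq; elim: N => [|N IH]; first by rewrite big_ord0 mulr0 subrr mul0r addr0.
have := proj_contraction k_gt0 [ffun x => p N x - eta * unitv R (obs N) x] Pq.
rewrite sqdist_descent big_ord_recr mulrDr -natr1 /=; lra.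
Qed.

Lemma gd_regret (q : vec) : (0 < L)%N -> Pset q ->
  \sum_(l < L) (p l (obs l) - q (obs l)) <= Num.sqrt (k%:R * L%:R).
Proof.
move=> L_gt0 [q02 sum_q]; have := gd_telescope L (conj q02 sum_q).
have L0 : 0 < L%:R :> R by rewrite ltr0n.
have k0 : 0 < k%:R :> R by rewrite ltr0n.
have eta0 : 0 < eta by rewrite sqrtr_gt0 divr_gt0.
have L_eta2 : L%:R * eta ^+ 2 = k%:R by rewrite sqr_sqrtr ?divr_ge0 ?ler0n // mulrC divfK ?gt_eqF.
have dist0 : sqdist (p 0) q <= k%:R.
  have -> : k%:R = \sum_(x : 'I_k) (1 : R) by rewrite sumr_const card_ord.
  apply: ler_sum => x _.
  by rewrite ffunE; have := q02 x; nra.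
have eta_sqrt : eta * Num.sqrt (k%:R * L%:R) = k%:R.
  rewrite -sqrtrM ?divr_ge0 ?ler0n //.
  have -> : k%:R / L%:R * (k%:R * L%:R) = k%:R ^+ 2 :> R by field; rewrite gt_eqF.
  by rewrite sqrtr_sqr ger0_norm ?ler0n.
move=> tele; rewrite -(ler_pM2l eta0) eta_sqrt; have := sqdist_ge0 (p L) q; lra.
Qed.

End ProjectedGradient.

Lemma sum_ord_blocks (R : realType) (f : nat -> R) (L r : nat) :
  \sum_(t < r * L) f t = \sum_(j < r) \sum_(l < L) f (j * L + l)%N.
Proof.
rewrite -(big_mkord xpredT f) big_nat_mul big_mkord; apply: eq_bigr => j _.
rewrite -{1}[(j * L)%N]add0n big_addn mulSn addnK big_mkord.
by apply: eq_bigr => l _; rewrite addnC.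
Qed.

Lemma sum_enum_rank_lt (R : realType) (T : finType) (G : nat -> R) (r : nat) :
  (r <= #|T|)%N ->
  \sum_(j < r) G j = \sum_(x : T | (enum_rank x < r)%N) G (enum_rank x).
Proof.
move=> r_le; rewrite (big_ord_widen _ _ r_le) (reindex (@enum_rank T)) //=.
exact/onW_bij/enum_rank_bij.
Qed.

Lemma ge_of_sum_eq0 (R : realType) (I : finType) (f : I -> R) (g : R) x :
  (forall y, f y <= g) -> \sum_y f y = 0 -> 0 <= g -> - (#|I|%:R * g) <= f x.
Proof.
move=> f_le sum0 g0; have := sum0; rewrite (bigD1 x) //= => sum0x.
have : \sum_(y | y != x) f y <= \sum_(y | y != x) g by apply: ler_sum.
have : \sum_(y : I) g = g + \sum_(y | y != x) g by rewrite (bigD1 x).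
rewrite [\sum_(y : I) g]sumr_const -mulr_natl; lra.
Qed.

Section Profiles.
Variables (n : nat) (m : 'I_n -> nat).

Lemma upd_at (a : Prof m) i (x : 'I_(m i)) : upd a x i = x.
Proof. by rewrite /upd ffunE; case: eqP => // e; rewrite (eq_irrelevance e erefl). Qed.

Lemma upd_ne (a : Prof m) i (x : 'I_(m i)) j : i != j -> upd a x j = a j.
Proof. by move=> ij; rewrite /upd ffunE; case: eqP => // e; rewrite e eqxx in ij. Qed.

Lemma upd_id (a : Prof m) i : upd a (a i) = a.
Proof. by apply/ffunP => j; rewrite /upd ffunE; case: eqP => // e; subst j. Qed.

Lemma eq_upd (a b : Prof m) i (x : 'I_(m i)) :
  (forall j, j != i -> a j = b j) -> upd a x = upd b x.
Proof.
move=> ab; apply/ffunP => j; rewrite /upd !ffunE; case: eqP => // e.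
by apply: ab; apply/eqP => ji; apply: e; rewrite ji.
Qed.

End Profiles.

Section Game.
Variables (R : realType) (n : nat) (m : 'I_n -> nat).
Hypothesis m_gt0 : forall i, (0 < m i)%N.
Variables (U : 'I_n -> Prof m -> R) (act : nat -> Prof m) (C : R) (L : nat).
Hypothesis U01 : forall i a, 0 <= U i a <= 1.
Hypothesis L_gt0 : (0 < L)%N.
Hypothesis act_no_regret : no_regret U L act C.

Local Notation T := (horizon m L).
Local Notation N := #|{: Ph m}|.

Definition round (ph : Ph m) (l : nat) : nat := (enum_rank ph * L + l)%N.

Lemma phase_at_round ph l : (l < L)%N -> phase_at m L (round ph l) = Some ph.
Proof.
move=> lL; rewrite /phase_at /round divnMDl // divn_small // addn0.
by rewrite (nth_map ph) ?nth_enum_rank // -cardE ltn_ord.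
Qed.

Lemma round_mod ph l : (l < L)%N -> (round ph l %% L = l)%N.
Proof. by move=> lL; rewrite /round modnMDl modn_small. Qed.

Lemma signal_round ph l j : (l < L)%N ->
  signal m L (round ph l) j = if j == (val ph).1 then None else Some ((val ph).2 j).
Proof. by move=> lL; rewrite /signal phase_at_round. Qed.

Lemma signal_Some t j y : signal m L t j = Some y ->
  exists ph, [/\ phase_at m L t = Some ph, j != (val ph).1 & (val ph).2 j = y].
Proof.
rewrite /signal; case: (phase_at m L t) => [ph|//].
by case: ifP => // jn [<-]; exists ph; rewrite jn.
Qed.

Lemma pay_ne t ph j (z : 'I_(m j)) :
  phase_at m L t = Some ph -> j != (val ph).1 ->
  pay R L act t z = if z == (val ph).2 j then 2 else 0.
Proof. by move=> tph jn; rewrite /pay tph; case: eqP => // e; rewrite e eqxx in jn. Qed.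

Definition deviates j t : bool :=
  if signal m L t j is Some y then act t j != y else false.

(* Switching to the recommended action y gains the payment 2 and loses at most 1
   in utility, so every round in which j does not play y adds 1 to its regret. *)
Lemma deviations_le j (y : 'I_(m j)) :
  \sum_(t < T | signal m L t j == Some y) ((act t j != y)%:R : R) <= C * Num.sqrt T%:R.
Proof.
apply: le_trans (act_no_regret (Some y) (leqnn T) y); apply: ler_sum => t /eqP sig.
have [ph [tph jn <-]] := signal_Some sig.
rewrite /util upd_at !(pay_ne _ tph jn) eqxx; case: eqP => [<-|_].
  by rewrite upd_id /=; lra.
by have := U01 j (upd (act t) ((val ph).2 j)); have := U01 j (act t); rewrite /=; lra.
Qed.

Lemma sum_deviates_le j :
  \sum_(t < T) ((deviates j t)%:R : R) <= (m j)%:R * (C * Num.sqrt T%:R).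
Proof.
have split_y t : ((deviates j t)%:R : R) =
    \sum_(y : 'I_(m j)) ((signal m L t j == Some y)%:R * (act t j != y)%:R).
  rewrite /deviates; case: (signal m L t j) => [y0|]; last by rewrite big1 // => y _; rewrite mul0r.
  rewrite (bigD1 y0) //= eqxx mul1r big1 ?addr0 // => y y_ne.
  by case: eqP => [[e]|_]; [rewrite e eqxx in y_ne | rewrite mul0r].
under eq_bigr do rewrite split_y.
have -> : (m j)%:R * (C * Num.sqrt T%:R) = \sum_(y : 'I_(m j)) (C * Num.sqrt T%:R).
  by rewrite sumr_const card_ord mulr_natl.
rewrite exchange_big; apply: ler_sum => y _ /=; apply: le_trans (deviations_le y).
by rewrite [X in _ <= X]big_mkcond; apply: ler_sum => t _; case: eqP; rewrite ?mul1r ?mul0r.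
Qed.

Section Agent.
Variable i : 'I_n.
Local Notation k := (m i).
Local Notation k_gt0 := (m_gt0 i).

Definition gain (x : 'I_k) t :=
  util U L act t i (upd (act t) x) - util U L act t i (act t).

Definition phase_regret ph x := \sum_(l < L) gain x (round ph l).

Definition phase_util (ph : Ph m) (x : 'I_k) := U i (upd (val ph).2 x).

(* chosen so that the comparator lies in P_i *)
Definition offset ph := 1 + (\sum_y phase_util ph y) / k%:R.

Definition comparator ph : {ffun 'I_k -> R} := [ffun y => offset ph - phase_util ph y].

(* L times the error of the output at (x, b_{-i}), see output_err *)
Definition phase_err ph x :=
  \sum_(l < L) (phase_util ph x + pay R L act (round ph l) x) - L%:R * offset ph.

Definition others_deviate ph l : bool :=
  ~~ [forall j, (j != i) ==> (act (round ph l) j == (val ph).2 j)].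

Definition n_deviations ph : R := \sum_(l < L) (others_deviate ph l)%:R.

Lemma pay_gd ph l (x : 'I_k) : (val ph).1 = i -> (l < L)%N ->
  pay R L act (round ph l) x = gd R L (fun l' => act (round ph l') i) l x.
Proof.
case: ph => [[i0 b] b0] /= i0i lL; subst i0.
rewrite /pay phase_at_round //; case: eqP => // e.
by rewrite (eq_irrelevance e erefl) round_mod.
Qed.

Lemma gain_ge ph l x :
  phase_util ph x + pay R L act (round ph l) x - phase_util ph (act (round ph l) i)
    - pay R L act (round ph l) (act (round ph l) i) - 2 * (others_deviate ph l)%:R
  <= gain x (round ph l).
Proof.
rewrite /gain /util upd_at /phase_util; set a := act (round ph l).
case dev: (others_deviate ph l).
  have := U01 i (upd a x); have := U01 i a.
  have := U01 i (upd (val ph).2 x); have := U01 i (upd (val ph).2 (a i)).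
  rewrite /=; lra.
move/negbFE/forallP: dev => agree.
have ab j : j != i -> a j = (val ph).2 j by move=> ji; exact/eqP/(implyP (agree j) ji).
by rewrite (eq_upd x ab) -{3}(upd_id a i) (eq_upd (a i) ab) /=; lra.
Qed.

Lemma comparator_Pset ph : Pset (comparator ph).
Proof.
have k0 : 0 < k%:R :> R by rewrite ltr0n.
have u01 y : 0 <= phase_util ph y <= 1 by exact: U01.
have sum_u_ge0 : 0 <= \sum_y phase_util ph y.
  by apply: sumr_ge0 => y _; case/andP: (u01 y).
have sum_u_le : \sum_y phase_util ph y <= k%:R.
  have -> : k%:R = \sum_(y : 'I_k) (1 : R) by rewrite sumr_const card_ord.
  by apply: ler_sum => y _; case/andP: (u01 y).
have avg01 : 0 <= (\sum_y phase_util ph y) / k%:R <= 1.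
  by rewrite divr_ge0 ?ler0n //= ler_pdivrMr // mul1r.
split=> [y|]; first by rewrite ffunE /offset; have := u01 y; lra.
rewrite (eq_bigr (fun y => offset ph - phase_util ph y)) => [|y _]; last by rewrite ffunE.
by rewrite sumrB sumr_const card_ord /offset -mulr_natr; field; rewrite gt_eqF.
Qed.

Lemma phase_regret_ge ph x : (val ph).1 = i ->
  phase_err ph x - Num.sqrt (k%:R * L%:R) - 2 * n_deviations ph <= phase_regret ph x.
Proof.
move=> phi; pose obs l := act (round ph l) i.
have := gd_regret k_gt0 obs L_gt0 (comparator_Pset ph).
under eq_bigr => l _ do rewrite -(pay_gd _ phi (ltn_ord l)) ffunE.
move=> reg; rewrite /phase_regret.
apply: le_trans (ler_sum _ (fun (l : 'I_L) (_ : true) => gain_ge ph l x)).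
rewrite /phase_err /n_deviations mulr_sumr.
have -> : L%:R * offset ph = \sum_(l < L) offset ph by rewrite sumr_const card_ord mulr_natl.
suff -> : \sum_(l < L) (phase_util ph x + pay R L act (round ph l) x - phase_util ph (obs l)
          - pay R L act (round ph l) (obs l) - 2 * (others_deviate ph l)%:R)
       = \sum_(l < L) (phase_util ph x + pay R L act (round ph l) x) - \sum_(l < L) offset ph
         - \sum_(l < L) (pay R L act (round ph l) (obs l) - (offset ph - phase_util ph (obs l)))
         - \sum_(l < L) 2 * (others_deviate ph l)%:R by lra.
by rewrite -!sumrB; apply: eq_bigr => l _; ring.
Qed.

Lemma sum_phase_err ph : (val ph).1 = i -> \sum_x phase_err ph x = 0.
Proof.
move=> phi; have k0 : k%:R != 0 :> R by rewrite pnatr_eq0 -lt0n.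
have sum_pay l : (l < L)%N -> \sum_(x : 'I_k) pay R L act (round ph l) x = k%:R.
  move=> lL; under eq_bigr => x _ do rewrite (pay_gd x phi lL).
  by case: (gd_Pset R k_gt0 L (fun l' => act (round ph l') i) l).
rewrite /phase_err sumrB exchange_big.
under eq_bigr => l _ do rewrite big_split (sum_pay _ (ltn_ord l)).
rewrite !sumr_const !card_ord /offset /=.
by rewrite -[(_ + _) *+ L]mulr_natl -[(_ * _) *+ k]mulr_natl; field.
Qed.

Lemma regret_prefix r x : (r <= N)%N ->
  \sum_(t < r * L | signal m L t i == None) gain x t =
  \sum_(ph : Ph m | (enum_rank ph < r)%N && ((val ph).1 == i)) phase_regret ph x.
Proof.
move=> r_le; rewrite big_mkcond.
pose g t := if signal m L t i == None then gain x t else 0.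
rewrite (sum_ord_blocks g) (sum_enum_rank_lt (fun j => \sum_(l < L) g (j * L + l)%N) r_le).
rewrite big_mkcondr.
apply: eq_bigr => ph _; rewrite /phase_regret; case: eqP => [phi|phi].
  by apply: eq_bigr => l _; rewrite /g -/(round ph l) signal_round // phi eqxx.
rewrite big1 // => l _; rewrite /g -/(round ph l) signal_round //.
by case: (i =P (val ph).1) => // e; case: phi; rewrite e.
Qed.

Lemma others_deviate_le ph l : (val ph).1 = i -> (l < L)%N ->
  ((others_deviate ph l)%:R : R) <= \sum_j ((deviates j (round ph l))%:R : R).
Proof.
move=> phi lL; have sum_ge0 := sumr_ge0 _ (fun j (_ : true) => ler0n R (deviates j (round ph l))).
rewrite /others_deviate; case: (boolP [forall j, _]) => [//|/forallPn[j]].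
rewrite negb_imply => /andP[ji dev_j].
rewrite (bigD1 j) //= /deviates signal_round // phi (negbTE ji) dev_j /= lerDl.
by apply: sumr_ge0 => j' _; rewrite ler0n.
Qed.

Lemma sum_n_deviations_le (P : pred (Ph m)) :
  \sum_(ph | P ph && ((val ph).1 == i)) n_deviations ph
    <= (\sum_j m j)%:R * (C * Num.sqrt T%:R).
Proof.
pose F t := \sum_j ((deviates j t)%:R : R).
have F_ge0 t : 0 <= F t by apply: sumr_ge0 => j _; rewrite ler0n.
have all_rounds : \sum_ph \sum_(l < L) F (round ph l) = \sum_(t < T) F t.
  rewrite (sum_ord_blocks F) (sum_enum_rank_lt (fun r => \sum_(l < L) F (r * L + l)%N) (leqnn N)).
  by apply: eq_bigl => ph; rewrite ltn_ord.
apply: (@le_trans _ _ (\sum_(ph | P ph && ((val ph).1 == i)) \sum_(l < L) F (round ph l))).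
  by apply: ler_sum => ph /andP[_ /eqP phi]; apply: ler_sum => l _; exact: others_deviate_le.
apply: (@le_trans _ _ (\sum_ph \sum_(l < L) F (round ph l))).
  rewrite [X in _ <= X](bigID (fun ph => P ph && ((val ph).1 == i))) /= lerDl.
  by apply: sumr_ge0 => ph _; exact: sumr_ge0.
rewrite all_rounds /F exchange_big natr_sum mulr_suml.
by apply: ler_sum => j _; exact: sum_deviates_le.
Qed.

Definition regret_budget : R :=
  C * Num.sqrt T%:R + N%:R * Num.sqrt (k%:R * L%:R)
  + 2 * ((\sum_j m j)%:R * (C * Num.sqrt T%:R)).

Definition prefix_err r x :=
  \sum_(ph : Ph m | (enum_rank ph < r)%N && ((val ph).1 == i)) phase_err ph x.

Lemma prefix_err_le r x : (r <= N)%N -> prefix_err r x <= regret_budget.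
Proof.
move=> r_le; pose S (ph : Ph m) := (enum_rank ph < r)%N && ((val ph).1 == i).
apply: (@le_trans _ _ (\sum_(ph | S ph)
    (phase_regret ph x + Num.sqrt (k%:R * L%:R) + 2 * n_deviations ph))).
  by apply: ler_sum => ph /andP[_ /eqP phi]; have := phase_regret_ge x phi; lra.
rewrite !big_split /= -regret_prefix // -mulr_sumr.
have regret := act_no_regret None (leq_mul r_le (leqnn L)) x.
have n_dev := sum_n_deviations_le (fun ph => enum_rank ph < r)%N.
have n_phases : \sum_(ph | S ph) Num.sqrt (k%:R * L%:R) <= N%:R * Num.sqrt (k%:R * L%:R) :> R.
  have -> : N%:R * Num.sqrt (k%:R * L%:R) = \sum_(ph : Ph m) Num.sqrt (k%:R * L%:R) :> R.
    by rewrite sumr_const mulr_natl.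
  rewrite [X in _ <= X](bigID S) /= lerDl.
  by apply: sumr_ge0 => ph _; exact: sqrtr_ge0.
rewrite /regret_budget; lra.
Qed.

Lemma sum_prefix_err r : \sum_x prefix_err r x = 0.
Proof. by rewrite exchange_big big1 // => ph /andP[_ /eqP phi]; exact: sum_phase_err. Qed.

Lemma prefix_err_rank ph x : (val ph).1 = i ->
  prefix_err (enum_rank ph).+1 x = phase_err ph x + prefix_err (enum_rank ph) x.
Proof.
move=> phi; rewrite /prefix_err (bigD1 ph) /=; last by rewrite ltnSn phi eqxx.
congr (_ + _); apply: eq_bigl => ph'; rewrite ltnS leq_eqVlt.
case: (ph' =P ph) => [->|ne]; first by rewrite ltnn andbF.
suff -> : (nat_of_ord (enum_rank ph') == enum_rank ph) = false by rewrite andbT.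
by apply/negbTE/negP => /eqP/val_inj/enum_rank_inj.
Qed.

Lemma phase_err_bound ph x : (val ph).1 = i ->
  `|phase_err ph x| <= (k%:R + 1) * regret_budget.
Proof.
(* no-regret only bounds prefixes of agent i's phases; the zero sum over x turns
   the upper bound into a lower one, and a phase is a difference of prefixes *)
move=> phi; have rank_lt := ltn_ord (enum_rank ph).
have budget_ge0 : 0 <= regret_budget.
  by have := prefix_err_le x (leq0n N); rewrite /prefix_err big1.
have lower r : (r <= N)%N -> - (k%:R * regret_budget) <= prefix_err r x.
  move=> r_le; rewrite -[k in k%:R]card_ord.
  exact: ge_of_sum_eq0 (fun y => prefix_err_le y r_le) (sum_prefix_err r) budget_ge0.
have := prefix_err_rank x phi.
have := prefix_err_le x rank_lt; have := prefix_err_le x (ltnW rank_lt).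
have := lower _ rank_lt; have := lower _ (ltnW rank_lt).
rewrite ler_norml; lra.
Qed.

End Agent.

Definition shift (i : 'I_n) (a : Prof m) : R :=
  match [pick ph : Ph m | ((val ph).1 == i) &&
                          [forall j, (j != i) ==> ((val ph).2 j == a j)]] with
  | Some ph => - offset i ph
  | None => 0
  end.

Lemma shift_congr i (a a' : Prof m) :
  (forall j, j != i -> a j = a' j) -> shift i a = shift i a'.
Proof.
move=> aa'; rewrite /shift; congr (match _ with Some _ => _ | None => _ end).
apply: eq_pick => ph; congr (_ && _); apply: eq_forallb => j.
by case: (boolP (j != i)) => // ji; rewrite aa'.
Qed.

Lemma output_err i (a : Prof m) :
  `|U i a + shift i a - output R L act i a| <= ((m i)%:R + 1) * regret_budget i / L%:R.
Proof.
rewrite /output /shift; case: pickP => [ph /andP[/eqP phi /forallP agree] | no_phase]; last first.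
  pose x0 : 'I_(m i) := Ordinal (m_gt0 i).
  have b0 : val (upd a x0 i) == 0%N by rewrite upd_at.
  have := no_phase (exist _ (i, upd a x0) b0); rewrite /= eqxx /=.
  suff -> : [forall j, (j != i) ==> (upd a x0 j == a j)] by [].
  by apply/forallP => j; apply/implyP => ji; rewrite upd_ne // eq_sym.
move: ph phi agree => [[i0 b] b0] /= phi agree; subst i0.
set ph := exist _ (i, b) b0.
case: eqP => // e; rewrite (eq_irrelevance e erefl) /=.
have ba j : j != i -> b j = a j by move=> ji; exact/eqP/(implyP (agree j) ji).
have u_a : phase_util ph (a i) = U i a by rewrite /phase_util /= (eq_upd _ ba) upd_id.
have L0 : L%:R != 0 :> R by rewrite pnatr_eq0 -lt0n.
have -> : U i a - offset i ph - - L%:R^-1 * \sum_(l < L) pvec R L act ph l (a i)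
          = phase_err ph (a i) / L%:R.
  have pvec_pay (l : 'I_L) : pvec R L act ph l (a i) = pay R L act (round ph l) (a i).
    by rewrite (pay_gd _ (erefl : (val ph).1 = i) (ltn_ord l)).
  rewrite /phase_err big_split /= sumr_const card_ord u_a.
  by under eq_bigr => l _ do rewrite pvec_pay; field.
rewrite normrM normfV normr_nat.
by apply: ler_wpM2r; [rewrite invr_ge0 ler0n | exact: phase_err_bound].
Qed.

End Game.

Section Counting.
Variables (n : nat) (m : 'I_n -> nat).
Hypothesis m_ge2 : forall i, (2 <= m i)%N.

Lemma Mprod_gt0 : (0 < Mprod m)%N.
Proof. by rewrite prodn_gt0 // => i; apply: leq_trans (m_ge2 i). Qed.

Lemma leq_Mprod i : (m i <= Mprod m)%N.
Proof.
rewrite /Mprod (bigD1 i) //= leq_pmulr // prodn_gt0 // => j.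
by apply: leq_trans (m_ge2 j).
Qed.

Lemma n_le_Mprod : (n <= Mprod m)%N.
Proof.
apply: leq_trans (ltnW (ltn_expl n (ltnSn 1))) _.
rewrite -[n in (2 ^ n)%N]card_ord -prod_nat_const.
by apply: leq_prod => i _; exact: m_ge2.
Qed.

Lemma card_Prof : #|{: Prof m}| = Mprod m.
Proof.
rewrite card_dep_ffun foldrE big_map big_enum /Mprod /=.
by apply: eq_bigr => i _; rewrite card_ord.
Qed.

Lemma card_Ph_le : (#|{: Ph m}| <= Mprod m ^ 2)%N.
Proof.
rewrite card_sig; apply: leq_trans (max_card _) _.
by rewrite card_prod card_ord card_Prof expnS expn1 leq_mul2r n_le_Mprod orbT.
Qed.

Lemma sum_m_le : (\sum_j m j <= Mprod m ^ 2)%N.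
Proof.
apply: leq_trans (_ : \sum_(j < n) Mprod m <= _)%N.
  by apply: leq_sum => j _; exact: leq_Mprod.
by rewrite sum_nat_const card_ord expnS expn1 leq_mul2r n_le_Mprod orbT.
Qed.

End Counting.

Lemma sqrt_nat_le (R : realType) (N : nat) : Num.sqrt (N%:R : R) <= N%:R.
Proof.
rewrite -[X in _ <= X]ger0_norm ?ler0n // -sqrtr_sqr ler_sqrt ?sqr_ge0 // -natrX ler_nat.
by case: N => // N; rewrite expnS expn1 leq_pmulr.
Qed.

Lemma regret_budget_le (R : realType) n (m : 'I_n -> nat) (C : R) L i :
  (forall i, 2 <= m i)%N -> 0 <= C ->
  ((m i)%:R + 1) * regret_budget m C L i
    <= Num.sqrt L%:R * (2 * (3 * C + 1) * (Mprod m)%:R ^+ 5).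
Proof.
move=> m_ge2 C0; set X := (Mprod m)%:R : R; set sL := Num.sqrt (L%:R : R).
have X1 : 1 <= X by rewrite ler1n Mprod_gt0.
have sL0 : 0 <= sL := sqrtr_ge0 _.
have k_le : (m i)%:R <= X by rewrite ler_nat leq_Mprod.
have N_le : #|{: Ph m}|%:R <= X ^+ 2 by rewrite -natrX ler_nat card_Ph_le.
have sum_m : (\sum_j m j)%:R <= X ^+ 2 by rewrite -natrX ler_nat sum_m_le.
have sqrtT : Num.sqrt (horizon m L)%:R <= X ^+ 2 * sL.
  rewrite /horizon natrM sqrtrM ?ler0n //; apply: ler_wpM2r => //.
  exact: le_trans (sqrt_nat_le _ _) N_le.
have sqrt_kL : Num.sqrt ((m i)%:R * L%:R) <= X * sL.
  rewrite sqrtrM ?ler0n //; apply: ler_wpM2r => //.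
  exact: le_trans (sqrt_nat_le _ _) k_le.
have Gam_le : regret_budget m C L i <= sL * ((3 * C + 1) * X ^+ 4).
  have X2_X4 : X ^+ 2 <= X ^+ 4 by apply: ler_weXn2l.
  have X3_X4 : X ^+ 3 <= X ^+ 4 by apply: ler_weXn2l.
  have h1 := ler_wpM2l C0 sqrtT.
  have h2 : #|{: Ph m}|%:R * Num.sqrt ((m i)%:R * L%:R) <= X ^+ 3 * sL.
    have -> : X ^+ 3 * sL = X ^+ 2 * (X * sL) by ring.
    by apply: ler_pM => //; exact: sqrtr_ge0.
  have h3 : (\sum_j m j)%:R * (C * Num.sqrt (horizon m L)%:R) <= C * (X ^+ 4 * sL).
    have -> : C * (X ^+ 4 * sL) = X ^+ 2 * (C * (X ^+ 2 * sL)) by ring.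
    by apply: ler_pM => //; apply: mulr_ge0 => //; exact: sqrtr_ge0.
  have f1 : C * (X ^+ 2 * sL) <= C * (X ^+ 4 * sL) by apply/ler_wpM2l/ler_wpM2r.
  have f2 : X ^+ 3 * sL <= X ^+ 4 * sL by apply: ler_wpM2r.
  have -> : sL * ((3 * C + 1) * X ^+ 4) = 3 * (C * (X ^+ 4 * sL)) + X ^+ 4 * sL by ring.
  rewrite /regret_budget; lra.
have bound0 : 0 <= sL * ((3 * C + 1) * X ^+ 4).
  by apply: mulr_ge0 => //; apply: mulr_ge0; [lra | exact: exprn_ge0 (le_trans ler01 X1)].
have -> : sL * (2 * (3 * C + 1) * X ^+ 5) = 2 * X * (sL * ((3 * C + 1) * X ^+ 4)) by ring.
apply: le_trans (ler_wpM2l _ Gam_le) _; first by rewrite addr_ge0 ?ler0n.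
by apply: ler_wpM2r => //; lra.
Qed.

Lemma horizon_le (R : realType) n (m : 'I_n -> nat) L :
  (forall i, 2 <= m i)%N -> (horizon m L)%:R <= (Mprod m)%:R ^+ 2 * L%:R :> R.
Proof.
by move=> m_ge2; rewrite -natrX -natrM ler_nat leq_mul2r (card_Ph_le m_ge2) orbT.
Qed.

Lemma output_err_le (R : realType) n (m : 'I_n -> nat)
  (U : 'I_n -> Prof m -> R) (act : nat -> Prof m) (C : R) L :
  (forall i, 2 <= m i)%N -> (forall i a, 0 <= U i a <= 1) -> (0 < L)%N ->
  no_regret U L act C -> 0 <= C ->
  forall i a, `|U i a + shift U i a - output R L act i a|
                <= 2 * (3 * C + 1) * (Mprod m)%:R ^+ 5 / Num.sqrt L%:R.
Proof.
move=> m_ge2 U01 L_gt0 act_no_regret C0 i a.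
have m_gt0 j : (0 < m j)%N by apply: leq_trans (m_ge2 j).
apply: le_trans (output_err m_gt0 U01 L_gt0 act_no_regret i a) _.
have sL0 : 0 < Num.sqrt (L%:R : R) by rewrite sqrtr_gt0 ltr0n.
rewrite ler_pdivrMr ?ltr0n //.
have -> : 2 * (3 * C + 1) * (Mprod m)%:R ^+ 5 / Num.sqrt L%:R * L%:R
          = Num.sqrt L%:R * (2 * (3 * C + 1) * (Mprod m)%:R ^+ 5).
  by rewrite -{2}[L%:R](sqr_sqrtr (ler0n R L)); field; rewrite gt_eqF.
exact: regret_budget_le.
Qed.

Lemma exists_sample_size (R : realType) (B eps : R) : 1 <= B -> 0 < eps -> eps <= 1 ->
  exists s : nat, [/\ (0 < s)%N, B / s%:R <= eps & s%:R ^+ 2 <= 4 * B ^+ 2 / eps ^+ 2].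
Proof.
move=> B1 eps0 eps1; set s := (Num.truncn (B / eps)).+1.
have B_eps1 : 1 <= B / eps by rewrite ler_pdivlMr // mul1r; lra.
have s_gt : B / eps < s%:R := truncnS_gt _.
have s_le : s%:R <= 2 * (B / eps).
  by rewrite /s -natr1; have := truncn_le (B / eps); rewrite divr_ge0 //; lra.
have s0 : 0 < s%:R :> R by rewrite ltr0n.
exists s; split=> //.
  by rewrite ler_pdivrMr // mulrC -ler_pdivrMr //; exact: ltW.
have -> : 4 * B ^+ 2 / eps ^+ 2 = (2 * (B / eps)) ^+ 2 by field; rewrite gt_eqF.
by rewrite ler_pXn2r ?nnegrE ?ler0n //; lra.
Qed.

Theorem theorem5p4 (R : realType) (c0 : R) (c : nat) :
  exists (K : R) (d : nat),
  forall (n : nat) (m : 'I_n -> nat), (forall i, 2 <= m i)%N ->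
  forall C eps : R, 0 <= C -> C <= c0 * (Mprod m)%:R ^+ c ->
  0 < eps -> eps <= 1 ->
  exists L : nat, (0 < L)%N /\
    (horizon m L)%:R <= K * (Mprod m)%:R ^+ d / eps ^+ 2 /\
    forall (U : 'I_n -> Prof m -> R) (act : nat -> Prof m),
      (forall i a, 0 <= U i a <= 1) ->
      no_regret U L act C ->
      eps_learns eps U (output R L act).
Proof.
exists (16 * (3 * `|c0| + 1) ^+ 2), (2 * c + 12)%N.
move=> n m m_ge2 C eps C0 C_le eps0 eps1; set X := (Mprod m)%:R : R.
have X1 : 1 <= X by rewrite ler1n Mprod_gt0.
set B := 2 * (3 * `|c0| + 1) * X ^+ (c + 5).
have err_le_B : 2 * (3 * C + 1) * X ^+ 5 <= B.
  have X5 : 0 < X ^+ 5 by apply: exprn_gt0; lra.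
  rewrite /B exprD [_ * (X ^+ c * _)]mulrA ler_pM2r //.
  by have := exprn_ege1 c X1; have := ler_norm c0; have := C_le; rewrite -/X; nra.
have [|s [s0 s_err s_size]] := exists_sample_size (B := B) _ eps0 eps1.
  by have := exprn_ege1 (c + 5) X1; have := normr_ge0 c0; rewrite /B; nra.
exists (s ^ 2)%N; split; [by rewrite expn_gt0 s0 | split].
  apply: le_trans (horizon_le _ _ m_ge2) _; rewrite natrX.
  have -> : 16 * (3 * `|c0| + 1) ^+ 2 * X ^+ (2 * c + 12) / eps ^+ 2
            = X ^+ 2 * (4 * B ^+ 2 / eps ^+ 2).
    have -> : (2 * c + 12 = 2 + (c + 5) * 2)%N by lia.
    by rewrite /B exprD exprM; field; rewrite gt_eqF.
  by apply: ler_wpM2l => //; apply: exprn_ge0; lra.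
move=> U act U01 act_no_regret; exists (shift U); split; first exact: shift_congr.
move=> i a; apply: le_trans (output_err_le m_ge2 U01 _ act_no_regret C0 i a) _.
  by rewrite expn_gt0 s0.
rewrite natrX sqrtr_sqr ger0_norm ?ler0n //; apply: le_trans s_err.
by rewrite ler_pM2r ?invr_gt0 ?ltr0n.
Qed.
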